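(* Assume Condition (T) (see context) and let $(\mathbf W_t)_{t\in\mathbb Z}$, $\mathbf W_t=(W_{1,t},\dots,W_{d,t})$, be the stationary solution of $\mathbf W_t=\mathbf A_t\mathbf W_{t-1}+\mathbf B_t$. Then for every $t\in\mathbb Z$ and $i=1,\dots,d$, $$W_{i,t}=\sum_{n=0}^\infty \Pi^{(i)}_{t,t-n+1}D_{i,t-n}\quad\text{a.s.},$$ where $D_{i,t}=\sum_{j:\,i\prec j}A_{ij,t}W_{j,t-1}+B_{i,t}$ and $\Pi^{(i)}_{t,s}=A_{ii,t}A_{ii,t-1}\cdots A_{ii,s}$ for $t\ge s$, $\Pi^{(i)}_{t,s}=1$ for $t<s$.
   Context: $(\mathbf A_t,\mathbf B_t)_{t\in\mathbb Z}$ is an i.i.d. sequence of copies of $(\mathbf A,\mathbf B)$, a random $d\times d$ matrix and random vector in $\mathbb R^d$, with entries $A_{ij,t}$, $B_{i,t}$. Condition (T): (T-1) $\mathbf A\ge 0$, $\mathbf B\ge 0$ entrywise a.s.; (T-2) $\mathbb P(B_i=0)<1$ for all $i$; (T-3) $\mathbb P(A_{ij}=0)=1$ whenever $i>j$; (T-4) there exist $\alpha_1,\dots,\alpha_d>0$, pairwise distinct, with $\mathbb E A_{ii}^{\alpha_i}=1$; (T-5) $\mathbb E A_{ij}^{\alpha_i}<\infty$; (T-6) $\mathbb E B_i^{\alpha_i}<\infty$; (T-7) $\mathbb E[A_{ii}^{\alpha_i}\log^+A_{ii}]<\infty$; (T-8) the law of $\log A_{ii}$ given $\{A_{ii}>0\}$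 is non-arithmetic. Under (T) the stationary solution exists, is unique, and is given by $\mathbf W_t=\sum_{n\ge0}\mathbf A_t\cdots\mathbf A_{t-n+1}\mathbf B_{t-n}$ (empty product = identity). Write $i\prec j$ if $i\neq j$ and $\mathbb P(A_{ij}>0)>0$. *)

From HB Require Import structures.
From mathcomp Require Import all_boot all_order all_algebra.
From mathcomp Require Import all_classical all_reals all_analysis.
Set Implicit Arguments. Unset Strict Implicit. Unset Printing Implicit Defensive.
Import Order.TTheory GRing.Theory Num.Theory.
Import numFieldNormedType.Exports.
Local Open Scope classical_set_scope.
Local Open Scope ring_scope.

Section Defs.
Context {R : realType} {dT : measure_display} {T : measurableType dT}
  (P : probability T R) (d : nat).

Definition coordAB (A : int -> T -> 'M[R]_d) (B : int -> T -> 'cV[R]_d)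
  (t : int) (x : T) (k : ('I_d * 'I_d) + 'I_d) : R :=
  match k with inl (i, j) => A t x i j | inr i => B t x i ord0 end.

Definition sigmaAB (A : int -> T -> 'M[R]_d) (B : int -> T -> 'cV[R]_d) (t : int) : set (set T) :=
  <<s [set E | exists k U, measurable (U : set R) /\
                           E = (fun x => coordAB A B t x k) @^-1` U] >>.

Definition indep_AB (A : int -> T -> 'M[R]_d) (B : int -> T -> 'cV[R]_d) : Prop :=
  forall (s : seq int) (E : int -> set T), uniq s ->
    (forall t, t \in s -> sigmaAB A B t (E t)) ->
    P (\big[setI/setT]_(t <- s) E t) = (\prod_(t <- s) P (E t))%E.

(* (A_t,B_t) has the same joint law as (A_0,B_0), for every t
   (equality of the laws on measurable rectangles of R^(d*d+d)). *)
Definition identdist_AB (A : int -> T -> 'M[R]_d) (B : int -> T -> 'cV[R]_d) : Prop :=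
  forall (t : int) (U : ('I_d * 'I_d) + 'I_d -> set R),
    (forall k, measurable (U k)) ->
    P (\big[setI/setT]_k ((fun x => coordAB A B t x k) @^-1` U k)) =
    P (\big[setI/setT]_k ((fun x => coordAB A B 0%R x k) @^-1` U k)).

Fixpoint prodA (A : int -> T -> 'M[R]_d) (t : int) (n : nat) (x : T) : 'M[R]_d :=
  match n with
  | 0 => 1%:M
  | n'.+1 => prodA A t n' x *m A (t - n'%:Z) x
  end.

(* The stationary solution W_t = sum_{n>=0} A_t...A_{t-n+1} B_{t-n}, coordinatewise;
   all terms are nonnegative, so the series is taken in the extended reals. *)
Definition Wsol (A : int -> T -> 'M[R]_d) (B : int -> T -> 'cV[R]_d) (t : int) (i : 'I_d) (x : T) : \bar R :=
  (\sum_(0 <= n <oo) ((prodA A t n x *m B (t - n%:Z) x) i ord0)%:E)%E.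

(* i ≺ j : i != j and P(A_ij > 0) > 0, with A a generic copy (here A_0). *)
Definition prec (A : int -> T -> 'M[R]_d) (i j : 'I_d) : Prop :=
  i != j /\ (0 < P [set x | (0 < A 0%R x i j)%R])%E.

(* Pi^(i)_{t,t-n+1} = A_ii,t ... A_ii,t-n+1 (= 1 when n = 0) *)
Definition PiA (A : int -> T -> 'M[R]_d) (i : 'I_d) (t : int) (n : nat) (x : T) : R :=
  \prod_(k < n) A (t - k%:Z) x i i.

Definition Dterm (A : int -> T -> 'M[R]_d) (B : int -> T -> 'cV[R]_d) (i : 'I_d) (t : int) (x : T) : \bar R :=
  (\sum_(j < d | `[< prec A i j >]) ((A t x i j)%:E * Wsol A B (t - 1) j x)
     + (B t x i ord0)%:E)%E.

Definition nonarithmetic_log (Y : T -> R) : Prop :=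
  forall h : R, 0 < h ->
    (0 < P [set x | ((0 < Y x) /\ ~ (exists k : int, ln (Y x) = k%:~R * h))%R])%E.

Definition logp (x : R) : R := Num.max (ln x) 0.

Definition condT (A : int -> T -> 'M[R]_d) (B : int -> T -> 'cV[R]_d)
  (alpha : 'I_d -> R) : Prop :=
  (forall i j, P [set x | 0 <= A 0%R x i j] = 1%E) /\
  (forall i, P [set x | 0 <= B 0%R x i ord0] = 1%E) /\
  (forall i, (P [set x | (B 0%R x i ord0 = 0)%R] < 1)%E) /\
  (forall i j : 'I_d, (j < i)%N -> P [set x | A 0%R x i j = 0] = 1%E) /\
  (forall i, 0 < alpha i) /\ injective alpha /\
  (forall i, (\int[P]_x ((A 0%R x i i) `^ (alpha i))%:E)%E = 1%E) /\
  (forall i j, (\int[P]_x ((A 0%R x i j) `^ (alpha i))%:E < +oo)%E) /\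
  (forall i, (\int[P]_x ((B 0%R x i ord0) `^ (alpha i))%:E < +oo)%E) /\
  (forall i, (\int[P]_x ((A 0%R x i i) `^ (alpha i) * logp (A 0%R x i i))%:E < +oo)%E) /\
  (forall i, nonarithmetic_log (fun x => A 0%R x i i)).

End Defs.

From HB Require Import structures.
From mathcomp Require Import all_boot all_order all_algebra.
From mathcomp Require Import all_classical all_reals all_analysis.
Import Order.TTheory GRing.Theory Num.Theory.
Local Open Scope classical_set_scope.
Local Open Scope ring_scope.

(* The identity holds pathwise off a null set.  Almost surely every entry of
   every (A_s, B_s) is nonnegative and A_ij,s = 0 whenever i != j and not
   i ≺ j (both facts are read off the law of (A_0, B_0)), so the i-th row of
   W_s = A_s W_{s-1} + B_s becomes W_{i,s} = A_ii,s W_{i,s-1} + D_{i,s}.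
   Iterating it N times bounds the N-th partial sum of the D-series by
   W_{i,t}; conversely the K-th partial sum of the series defining W_{i,t} is
   bounded by the K-th partial sum of the D-series, by induction on K for all
   i and t at once. *)

Lemma subzS (s : int) (n : nat) : s - n.+1%:Z = s - 1 - n%:Z.
Proof. by rewrite intS opprD addrA. Qed.

Section Pathwise.
Context {R : realType} {dT : measure_display} {T : measurableType dT}
  (P : probability T R) (d : nat)
  (A : int -> T -> 'M[R]_d) (B : int -> T -> 'cV[R]_d) (x : T).
Hypothesis A_ge0 : forall s i j, 0 <= A s x i j.
Hypothesis B_ge0 : forall s i, 0 <= B s x i ord0.

Lemma prodA_recl s n : prodA A s n.+1 x = A s x *m prodA A (s - 1) n x.
Proof.
elim: n s => [|n IHn] s; first by rewrite /= mul1mx mulmx1 subr0.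
by rewrite -[LHS]/(prodA A s n.+1 x *m A (s - n.+1%:Z) x) IHn -mulmxA subzS.
Qed.

Lemma prodA_ge0 s n i j : 0 <= prodA A s n x i j.
Proof.
elim: n s i j => [|n IHn] s i j /=; rewrite mxE; first by case: (i == j).
by apply: sumr_ge0 => k _; apply: mulr_ge0.
Qed.

Definition Wterm s n i := (prodA A s n x *m B (s - n%:Z) x) i ord0.

Lemma Wterm_ge0 s n i : 0 <= Wterm s n i.
Proof.
by rewrite /Wterm mxE; apply: sumr_ge0 => k _; apply: mulr_ge0 (prodA_ge0 _ _ _ _) _.
Qed.

Lemma WtermS s n i : Wterm s n.+1 i = \sum_j A s x i j * Wterm (s - 1) n j.
Proof. by rewrite /Wterm prodA_recl subzS -mulmxA mxE. Qed.

Definition Wpart K s i := \sum_(n < K) Wterm s n i.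

Lemma WpartS K s i :
  Wpart K.+1 s i = B s x i ord0 + \sum_j A s x i j * Wpart K (s - 1) j.
Proof.
rewrite /Wpart big_ord_recl; congr (_ + _); first by rewrite /Wterm /= mul1mx subr0.
under eq_bigr => n _ do rewrite lift0 WtermS.
by rewrite exchange_big; apply: eq_bigr => j _; rewrite mulr_sumr.
Qed.

Local Open Scope ereal_scope.

Lemma Wpart_le_Wsol K s i : (Wpart K s i)%:E <= Wsol A B s i x.
Proof.
apply: le_trans (nneseries_lim_ge K _); last by move=> n _ _; rewrite lee_fin Wterm_ge0.
by rewrite sumEFin big_mkord.
Qed.

Lemma Wsol_ge0 s i : 0 <= Wsol A B s i x.
Proof. by apply: nneseries_ge0 => n _ _; rewrite lee_fin Wterm_ge0. Qed.

Lemma Wsol_recl s i : Wsol A B s i x =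
  (B s x i ord0)%:E + \sum_j ((A s x i j)%:E * Wsol A B (s - 1) j x).
Proof.
have Wterm_ge0E u n j : 0 <= (Wterm u n j)%:E by rewrite lee_fin Wterm_ge0.
rewrite /Wsol (nneseries_recl (fun n _ => Wterm_ge0E s n i)) //.
congr (_ + _); first by rewrite /Wterm mul1mx subr0.
rewrite -nneseries_addn //.
under eq_eseriesr => n _ do rewrite addn1 WtermS -sumEFin.
rewrite nneseries_sum; last by move=> j n _; rewrite lee_fin mulr_ge0 ?Wterm_ge0.
apply: eq_bigr => j _; under eq_eseriesr => n _ do rewrite EFinM.
exact: nneseriesZl.
Qed.

Hypothesis A_offdiag : forall s i j, i != j -> ~ prec P A i j -> A s x i j = 0%R.

Lemma sum_row_prec (F : 'I_d -> \bar R) s i :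
  \sum_j ((A s x i j)%:E * F j) =
  (A s x i i)%:E * F i + \sum_(j | `[< prec P A i j >]) ((A s x i j)%:E * F j).
Proof.
rewrite (bigD1 i) //=; congr (_ + _).
rewrite (bigID (fun j => `[< prec P A i j >])) /= [X in _ + X]big1 ?adde0.
  apply: eq_bigl => j.
  by case: asboolP => [[ij _]|]; rewrite ?andbF // eq_sym ij.
by move=> j /andP[ji /asboolPn np]; rewrite A_offdiag ?mul0e // eq_sym.
Qed.

Lemma Dterm_ge0 s i : 0 <= Dterm P A B i s x.
Proof.
apply: adde_ge0; last by rewrite lee_fin.
by apply: sume_ge0 => j _; apply: mule_ge0; rewrite ?lee_fin ?Wsol_ge0.
Qed.

Lemma Wsol_diag_recl s i :
  Wsol A B s i x = (A s x i i)%:E * Wsol A B (s - 1) i x + Dterm P A B i s x.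
Proof. by rewrite Wsol_recl sum_row_prec /Dterm addeCA; congr (_ + _); apply: addeC. Qed.

Lemma PiA_recl i s n : PiA A i s n.+1 x = (A s x i i * PiA A i (s - 1) n x)%R.
Proof.
rewrite /PiA big_ord_recl /= subr0; congr (_ * _)%R.
by apply: eq_bigr => k _; rewrite /bump /= add1n subzS.
Qed.

Definition Dpart i N s :=
  \sum_(0 <= n < N) ((PiA A i s n x)%:E * Dterm P A B i (s - n%:Z) x).

Lemma Dpart_term_ge0 i s n : 0 <= (PiA A i s n x)%:E * Dterm P A B i (s - n%:Z) x.
Proof. by apply: mule_ge0; rewrite ?lee_fin ?prodr_ge0 ?Dterm_ge0. Qed.

Lemma DpartS i N s :
  Dpart i N.+1 s = Dterm P A B i s x + (A s x i i)%:E * Dpart i N (s - 1).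
Proof.
rewrite /Dpart big_nat_recl // /PiA big_ord0 mul1e subr0; congr (_ + _).
rewrite ge0_sume_distrr; last by move=> n _; apply: Dpart_term_ge0.
apply: eq_bigr => n _.
by rewrite -/(PiA A i s n.+1 x) PiA_recl EFinM -muleA subzS.
Qed.

Lemma Dpart_le_Wsol i N s : Dpart i N s <= Wsol A B s i x.
Proof.
elim: N s => [|N IHN] s; first by rewrite /Dpart big_geq ?Wsol_ge0.
rewrite DpartS Wsol_diag_recl addeC; apply: leeD2r.
by apply: lee_wpmul2l; rewrite ?lee_fin.
Qed.

Lemma Wpart_le_Dpart i K s : (Wpart K s i)%:E <= Dpart i K s.
Proof.
elim: K s i => [|K IHK] s i; first by rewrite /Wpart /Dpart big_ord0 big_geq.
rewrite WpartS EFinD -sumEFin; under eq_bigr => j _ do rewrite EFinM.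
rewrite sum_row_prec DpartS /Dterm.
rewrite [X in _ <= X]addeAC [X in _ <= X]addeC [X in _ <= _ + X]addeC.
apply: leeD2l; apply: leeD.
  by apply: lee_wpmul2l; rewrite ?lee_fin.
by apply: lee_sum => j _; apply: lee_wpmul2l; rewrite ?lee_fin ?Wpart_le_Wsol.
Qed.

Lemma Wsol_Dseries t i : Wsol A B t i x =
  \sum_(0 <= n <oo) ((PiA A i t n x)%:E * Dterm P A B i (t - n%:Z) x).
Proof.
apply/le_anti/andP; split; apply: lime_le.
- by apply: is_cvg_nneseries => n _ _; rewrite lee_fin Wterm_ge0.
- near=> K; rewrite sumEFin big_mkord.
  apply: le_trans (Wpart_le_Dpart i K t) _.
  by apply: nneseries_lim_ge => n _ _; apply: Dpart_term_ge0.
- by apply: is_cvg_nneseries => n _ _; apply: Dpart_term_ge0.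
- by near=> N; apply: Dpart_le_Wsol.
Unshelve. all: by end_near.
Qed.

End Pathwise.

Section AlmostSure.
Context {R : realType} {dT : measure_display} {T : measurableType dT}
  {P : probability T R}.

Lemma ae_forall_countable {I : countType} {Q : I -> T -> Prop} :
  (forall i, {ae P, forall x, Q i x}) -> {ae P, forall x, forall i, Q i x}.
Proof.
move=> aeQ.
pose Qn n x := if (unpickle n : option I) is Some i then Q i x else True.
have /ae_foralln : forall n, {ae P, forall x, Qn n x}.
  by move=> n; rewrite /Qn; case: unpickle => [i|]; [apply: aeQ | apply: aeW].
by apply: filterS => x Qx i; move: (Qx (pickle i)); rewrite /Qn pickleK.
Qed.

Lemma ae_not_of_measure0 {E : set T} :
  measurable E -> P E = 0%E -> {ae P, forall x, ~ E x}.
Proof. by move=> mE PE0; exists E; split => // x /= /contrapT. Qed.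

Lemma ae_of_probability1 {E : set T} :
  measurable E -> P E = 1%E -> {ae P, forall x, E x}.
Proof.
move=> mE PE1; have PCE0 : P (~` E) = 0%E by rewrite probability_setC // PE1 subee.
by apply: filterS (ae_not_of_measure0 (measurableC mE) PCE0) => x /contrapT.
Qed.

End AlmostSure.

Section IdentDist.
Context {R : realType} {dT : measure_display} {T : measurableType dT}
  {P : probability T R} {d : nat}
  {A : int -> T -> 'M[R]_d} {B : int -> T -> 'cV[R]_d}.
Hypothesis mA : forall t i j, measurable_fun setT (fun x => A t x i j).
Hypothesis mB : forall t i, measurable_fun setT (fun x => B t x i ord0).
Hypothesis idAB : identdist_AB P A B.

Lemma measurable_coordAB_preimage t k {U : set R} :
  measurable U -> measurable ((fun x => coordAB A B t x k) @^-1` U).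
Proof.
move=> mU; rewrite -[_ @^-1` _]setTI.
by case: k => [[i j]|i]; [apply: mA | apply: mB].
Qed.

Lemma identdist_coordAB t k {U : set R} : measurable U ->
  P ((fun x => coordAB A B t x k) @^-1` U) = P ((fun x => coordAB A B 0 x k) @^-1` U).
Proof.
move=> mU; pose U' k' := if k' == k then U else setT.
have bigU s : \big[setI/setT]_k' ((fun x => coordAB A B s x k') @^-1` U' k')
    = (fun x => coordAB A B s x k) @^-1` U.
  by rewrite (bigD1 k) //= /U' eqxx big1 ?setIT // => k' /negbTE ->.
by rewrite -!bigU; apply: idAB => k'; rewrite /U'; case: ifP.
Qed.

Lemma ae_coordAB_shift t k {U : set R} : measurable U ->
  {ae P, forall x, U (coordAB A B 0 x k)} -> {ae P, forall x, U (coordAB A B t x k)}.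
Proof.
move=> mU; have mCU := measurableC mU.
change (P.-negligible ((fun x => coordAB A B 0 x k) @^-1` ~` U) ->
        P.-negligible ((fun x => coordAB A B t x k) @^-1` ~` U)).
have mpre s : measurable ((fun x => coordAB A B s x k) @^-1` ~` U).
  exact: measurable_coordAB_preimage.
by rewrite !negligibleP // => /(eq_trans (identdist_coordAB t k mCU)).
Qed.

Lemma ae_coordAB_of_probability1 t k {U : set R} : measurable U ->
  P ((fun x => coordAB A B 0 x k) @^-1` U) = 1%E ->
  {ae P, forall x, U (coordAB A B t x k)}.
Proof.
move=> mU PU1; apply: (ae_coordAB_shift _ _ mU).
exact: ae_of_probability1 (measurable_coordAB_preimage 0 k mU) PU1.
Qed.

Lemma ae_coordAB_not_of_measure0 t k {U : set R} : measurable U ->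
  P ((fun x => coordAB A B 0 x k) @^-1` U) = 0%E ->
  {ae P, forall x, ~ U (coordAB A B t x k)}.
Proof.
move=> mU PU0; apply: (ae_coordAB_shift _ _ (measurableC mU)).
exact: ae_not_of_measure0 (measurable_coordAB_preimage 0 k mU) PU0.
Qed.

Hypothesis A0_ge0 : forall i j, P [set x | 0 <= A 0 x i j] = 1%E.
Hypothesis B0_ge0 : forall i, P [set x | 0 <= B 0 x i ord0] = 1%E.

Lemma ae_A_ge0 t i j : {ae P, forall x, 0 <= A t x i j}.
Proof.
have ge0E : [set x | 0 <= A 0 x i j] =
    (fun x => coordAB A B 0 x (inl (i, j))) @^-1` `[0, +oo[.
  by apply/seteqP; split => x /=; rewrite in_itv /= andbT.
apply: filterS (ae_coordAB_of_probability1 t (inl (i, j)) (measurable_itv `[0, +oo[) _).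
  by move=> x; rewrite /= in_itv /= andbT.
by rewrite -ge0E A0_ge0.
Qed.

Lemma ae_B_ge0 t i : {ae P, forall x, 0 <= B t x i ord0}.
Proof.
have ge0E : [set x | 0 <= B 0 x i ord0] =
    (fun x => coordAB A B 0 x (inr i)) @^-1` `[0, +oo[.
  by apply/seteqP; split => x /=; rewrite in_itv /= andbT.
apply: filterS (ae_coordAB_of_probability1 t (inr i) (measurable_itv `[0, +oo[) _).
  by move=> x; rewrite /= in_itv /= andbT.
by rewrite -ge0E B0_ge0.
Qed.

Lemma ae_A_eq0_offdiag t i j :
  {ae P, forall x, i != j -> ~ prec P A i j -> A t x i j = 0}.
Proof.
have [ij_prec|nprec] := pselect (prec P A i j); first by apply: aeW.
have [->|ij] := eqVneq i j; first exact: aeW.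
have gt0E : [set x | 0 < A 0 x i j] =
    (fun x => coordAB A B 0 x (inl (i, j))) @^-1` `]0, +oo[.
  by apply/seteqP; split => x /=; rewrite in_itv /= andbT.
have P0 : P [set x | 0 < A 0 x i j] = 0%E.
  apply/eqP; rewrite eq_le measure_ge0 andbT leNgt.
  by apply/negP => P_gt0; apply: nprec.
have := ae_coordAB_not_of_measure0 t (inl (i, j)) (measurable_itv `]0, +oo[) _.
rewrite -gt0E => /(_ P0) not_gt0; apply: filterS2 not_gt0 (ae_A_ge0 t i j) => x.
by rewrite /= in_itv /= andbT => /negP; rewrite -leNgt => le0 ge0 _ _; apply/le_anti/andP.
Qed.

Lemma ae_ge0_prec_support : {ae P, forall x,
  [/\ forall s i j, 0 <= A s x i j, forall s i, 0 <= B s x i ord0 &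
       forall s i j, i != j -> ~ prec P A i j -> A s x i j = 0]}.
Proof.
have A_ge0 := ae_forall_countable (fun p : int * 'I_d * 'I_d =>
  ae_A_ge0 p.1.1 p.1.2 p.2).
have B_ge0 := ae_forall_countable (fun p : int * 'I_d => ae_B_ge0 p.1 p.2).
have A_offdiag := ae_forall_countable (fun p : int * 'I_d * 'I_d =>
  ae_A_eq0_offdiag p.1.1 p.1.2 p.2).
apply: filterS3 A_ge0 B_ge0 A_offdiag => x A_ge0 B_ge0 A_offdiag; split.
- by move=> s i j; apply: A_ge0 (s, i, j).
- by move=> s i; apply: B_ge0 (s, i).
- by move=> s i j; apply: A_offdiag (s, i, j).
Qed.

End IdentDist.

Theorem lemma5p1 (R : realType) (dT : measure_display) (T : measurableType dT)
  (P : probability T R) (d : nat)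
  (A : int -> T -> 'M[R]_d) (B : int -> T -> 'cV[R]_d) (alpha : 'I_d -> R) :
  (forall t i j, measurable_fun setT (fun x => A t x i j)) ->
  (forall t i, measurable_fun setT (fun x => B t x i ord0)) ->
  indep_AB P A B ->
  identdist_AB P A B ->
  condT P A B alpha ->
  forall (t : int) (i : 'I_d),
    {ae P, forall x,
      Wsol A B t i x =
      (\sum_(0 <= n <oo) ((PiA A i t n x)%:E * Dterm P A B i (t - n%:Z) x))%E}.
Proof.
move=> mA mB _ idAB [A0_ge0 [B0_ge0 _]] t i.
apply: filterS (ae_ge0_prec_support mA mB idAB A0_ge0 B0_ge0).
by move=> x [A_ge0 B_ge0 A_offdiag]; apply: Wsol_Dseries.
Qed.
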